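(* Let $T$ be a non-abelian finite simple group. The fixity of $\mathrm{Hol}(T)$ in its action on $T$ (the maximum number of points of $T$ fixed by a non-identity element of $\mathrm{Hol}(T)$) equals $h(T)=\max\{|C_T(x)|:1\neq x\in\mathrm{Aut}(T)\}$.
   Context: $\mathrm{Hol}(T)=T{:}\mathrm{Aut}(T)$ acts on $T$ by $t^{g\alpha}=(g^{-1}t)^\alpha$ for $g\in T$, $\alpha\in\mathrm{Aut}(T)$. *)

From mathcomp Require Import all_boot all_order all_fingroup all_solvable.
Set Implicit Arguments. Unset Strict Implicit. Unset Printing Implicit Defensive.
Local Open Scope group_scope.

(* Action of the holomorph Hol(T) = T : Aut(T) on T, with an element
   represented as a pair (g, a), g \in T, a \in Aut T:
   t^(g a) = (g^-1 t)^a. *)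
Definition hol_act (gT : finGroupType) (p : gT * {perm gT}) (t : gT) : gT :=
  p.2 (p.1^-1 * t).

Definition hol_fix (gT : finGroupType) (T : {set gT}) (p : gT * {perm gT}) : nat :=
  #|[set t in T | hol_act p t == t]|.

Definition hol_fixity (gT : finGroupType) (T : {set gT}) : nat :=
  \max_(p : gT * {perm gT} | [&& p.1 \in T, p.2 \in Aut T & p != (1, 1)])
     hol_fix T p.

Definition autC (gT : finGroupType) (T : {set gT}) (a : {perm gT}) : {set gT} :=
  [set t in T | a t == t].

Definition hT (gT : finGroupType) (T : {set gT}) : nat :=
  \max_(a in Aut T | a != 1) #|autC T a|.

From mathcomp Require Import all_boot all_order all_fingroup all_solvable.
Set Implicit Arguments. Unset Strict Implicit. Unset Printing Implicit Defensive.
Local Open Scope group_scope.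

(* An element (g, a) of Hol(T) = T : Aut(T) acts on T by t |-> (g^-1 t)^a.
   The key observation is that its fixed-point set is either empty or a
   left coset t0 * C_T(a) of the centraliser C_T(a) = {t in T | t^a = t}:
   if t0 is fixed, then t = t0 u is fixed iff u^a = u, because a is a
   homomorphism and a(g^-1 t0) = t0.  Hence every element (g, a) fixes at
   most |C_T(a)| points.  Moreover the pure translations (g, 1) with g <> 1
   fix nothing, while the pure automorphisms (1, a) fix exactly C_T(a).
   So the maximum of the fixed-point counts over non-identity elements of
   Hol(T) is the maximum of |C_T(a)| over non-identity a in Aut(T). *)

Definition hol_fixed (gT : finGroupType) (T : {set gT}) (p : gT * {perm gT}) :
  {set gT} := [set t in T | hol_act p t == t].

Section HolomorphFixedPoints.

Variables (gT : finGroupType) (T : {group gT}).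

Lemma hol_fixed_lcoset (g t0 : gT) (a : {perm gT}) :
  g \in T -> a \in Aut T -> t0 \in hol_fixed T (g, a) ->
  hol_fixed T (g, a) = t0 *: autC T a.
Proof.
move=> Tg Aut_a; rewrite inE /hol_act /= => /andP [Tt0 /eqP fix_t0].
have a_morph := morphicP (Aut_morphic Aut_a).
apply/setP => t; rewrite mem_lcoset !inE /hol_act /=.
have [Tt | notTt] := boolP (t \in T); last first.
  by rewrite groupMl ?groupV // (negbTE notTt).
have Tu : t0^-1 * t \in T by rewrite groupM ?groupV.
(* a(g^-1 t) = a(g^-1 t0) a(t0^-1 t) = t0 a(t0^-1 t) *)
have split_a : a (g^-1 * t) = t0 * a (t0^-1 * t).
  rewrite -{1}(mulKVg t0 t) mulgA a_morph ?fix_t0 //.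
  by rewrite groupM ?groupV.
rewrite Tu split_a; apply/eqP/eqP => [fix_t | fix_u].
  by apply: (mulgI t0); rewrite fix_t mulKVg.
by rewrite fix_u mulKVg.
Qed.

Lemma hol_fix_le (g : gT) (a : {perm gT}) :
  g \in T -> a \in Aut T -> hol_fix T (g, a) <= #|autC T a|.
Proof.
move=> Tg Aut_a; rewrite /hol_fix -/(hol_fixed T (g, a)).
have [-> | [t0 fix_t0]] := set_0Vmem (hol_fixed T (g, a)); first by rewrite cards0.
by rewrite (hol_fixed_lcoset Tg Aut_a fix_t0) card_lcoset.
Qed.

Lemma hol_fix_translation (g : gT) : g != 1 -> hol_fix T (g, 1) = 0.
Proof.
move=> g_ne1; apply/eqP; rewrite cards_eq0; apply/eqP/setP => t.
rewrite !inE /hol_act /= perm1 (canF_eq (mulgK t)) mulgV eq_invg1.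
by rewrite (negbTE g_ne1) andbF.
Qed.

Lemma hol_fix_aut (a : {perm gT}) : hol_fix T (1, a) = #|autC T a|.
Proof.
by apply: eq_card => t; rewrite !inE /hol_act /= invg1 mul1g.
Qed.

End HolomorphFixedPoints.

Theorem lemma3p3 (gT : finGroupType) (T : {group gT}) :
  simple T -> ~~ abelian T -> hol_fixity T = hT T.
Proof.
move=> _ _; apply/eqP; rewrite eqn_leq; apply/andP; split.
  apply/bigmax_leqP => [[g a]] /= /and3P [Tg Aut_a ne_id].
  have [a1 | a_ne1] := eqVneq a 1.
    have g_ne1 : g != 1 by apply: contraNneq ne_id; rewrite a1 => ->.
    by rewrite a1 hol_fix_translation.
  apply: leq_trans (hol_fix_le Tg Aut_a) _.
  by apply: (leq_bigmax_cond a); rewrite Aut_a a_ne1.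
apply/bigmax_leqP => a /andP [Aut_a a_ne1].
rewrite -hol_fix_aut; apply: (leq_bigmax_cond (1, a)) => /=.
by rewrite group1 Aut_a; apply: contra a_ne1 => /eqP [->].
Qed.
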